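(* The function $\nu(x)$ is positive for $x\in(1,1.732]$; consequently $\mu(x)$ is decreasing on $(1,1.732]$.
   Context: For $x\ge1$ let $\psi_1(x)=\frac32\int_0^{\pi/2}(1-x^{-2}\sin^2u)^{3/2}\,du$, $\psi_2(x)=\frac32(1-x^{-2})^2\int_0^{\pi/2}\frac{\sin^4v}{\sqrt{1-(1-x^{-2})\sin^2v}}\,dv$, $\phi_1=\frac{4}{3\pi}\psi_1$, $\phi_2=\frac{16}{3\pi}\psi_2$. Let $\mu(x)=\frac{\psi_2'\psi_2+\psi_1'\psi_1}{\psi_2'\psi_1-\psi_1'\psi_2}$ and $\nu=(\phi_2'\phi_1-\phi_1'\phi_2)'(\phi_2'\phi_2+16\phi_1'\phi_1)-(\phi_2'\phi_1-\phi_1'\phi_2)(\phi_2'\phi_2+16\phi_1'\phi_1)'$, so that $\big(\frac{1}{4\mu}\big)'=\nu/(\phi_2'\phi_2+16\phi_1'\phi_1)^2$. *)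

From Stdlib Require Import Reals.
From Coquelicot Require Import Coquelicot.
Open Scope R_scope.

(* psi_1(x) = 3/2 * int_0^{pi/2} (1 - x^{-2} sin^2 u)^{3/2} du ;
   t^{3/2} is written t * sqrt t (t >= 0 on the relevant range). *)
Definition psi1 (x : R) : R :=
  3/2 * RInt (fun u => (1 - sin u ^ 2 / x ^ 2) * sqrt (1 - sin u ^ 2 / x ^ 2)) 0 (PI/2).

Definition psi2 (x : R) : R :=
  3/2 * (1 - / x ^ 2) ^ 2 *
  RInt (fun v => sin v ^ 4 / sqrt (1 - (1 - / x ^ 2) * sin v ^ 2)) 0 (PI/2).

Definition phi1 (x : R) : R := 4 / (3 * PI) * psi1 x.
Definition phi2 (x : R) : R := 16 / (3 * PI) * psi2 x.

Definition mu (x : R) : R :=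
  (Derive psi2 x * psi2 x + Derive psi1 x * psi1 x) /
  (Derive psi2 x * psi1 x - Derive psi1 x * psi2 x).

Definition Wphi (x : R) : R := Derive phi2 x * phi1 x - Derive phi1 x * phi2 x.
Definition Qphi (x : R) : R := Derive phi2 x * phi2 x + 16 * Derive phi1 x * phi1 x.

Definition nu (x : R) : R := Derive Wphi x * Qphi x - Wphi x * Derive Qphi x.

(** Put [c = x^-2] and [J k b c = \int_0^{pi/2} sin^k u (1 - c sin^2 u)^b du].
    Then [psi1 = 3/2 J 0 (3/2) c] and [psi2 = 3/2 (1-c)^2 J 4 (-1/2) (1-c)] are the two
    Frobenius solutions, at [c = 0] and at [c = 1], of Gauss's equation
    [c (1-c) F'' + F' + 3/4 F = 0] (the one of 2F1(-3/2, 1/2; 1; c)); this follows from the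
    contiguous relations of [J], obtained by integrating by parts.  In the variable [x] both
    therefore solve [x^2 (x^2-1) psi'' = x (3-x^2) psi' - 3 psi].  For two solutions of a common
    equation [p'' = a p' + b p], the quantities [W = p1 p2' - p2 p1'] and
    [Q = p1 p1' + p2 p2'] satisfy [W' Q - W Q' = - W (b |p|^2 + |p'|^2)].  As [nu] is a positive
    multiple of [W' Q - W Q'] and [mu = Q / W], both claims reduce to [W > 0] and
    [x^2 (x^2-1) |psi'|^2 < 3 |psi|^2] on [(1, 1.732]].  These follow from two-sided bounds on
    the [J] integrals in terms of Wallis integrals and from two polynomial inequalities in
    [t = 1/x] on [[4/7, 1]], certified by Bernstein expansions with nonnegative coefficients. *)

From Stdlib Require Import Reals Lra Psatz Nsatz.
From Coquelicot Require Import Coquelicot.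
Open Scope R_scope.

Lemma is_derive_eq (f : R -> R) x l l' : is_derive f x l -> l = l' -> is_derive f x l'.
Proof. intros H <-; exact H. Qed.

Lemma RInt_extR (f g : R -> R) a b :
  (forall x, Rmin a b < x < Rmax a b -> f x = g x) -> RInt f a b = RInt g a b.
Proof. apply (RInt_ext (V := R_CompleteNormedModule)). Qed.

Lemma RInt_Rscal (f : R -> R) a b l : ex_RInt f a b -> RInt (fun x => l * f x) a b = l * RInt f a b.
Proof. apply (RInt_scal (V := R_CompleteNormedModule)). Qed.

Lemma RInt_Rplus (f g : R -> R) a b : ex_RInt f a b -> ex_RInt g a b ->
  RInt (fun x => f x + g x) a b = RInt f a b + RInt g a b.
Proof. apply (RInt_plus (V := R_CompleteNormedModule)). Qed.

Lemma RInt_Rminus (f g : R -> R) a b : ex_RInt f a b -> ex_RInt g a b ->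
  RInt (fun x => f x - g x) a b = RInt f a b - RInt g a b.
Proof. apply (RInt_minus (V := R_CompleteNormedModule)). Qed.

Lemma ex_RInt_Rscal (f : R -> R) a b l : ex_RInt f a b -> ex_RInt (fun x => l * f x) a b.
Proof. apply (ex_RInt_scal (V := R_CompleteNormedModule)). Qed.

Lemma ex_RInt_Rminus (f g : R -> R) a b : ex_RInt f a b -> ex_RInt g a b ->
  ex_RInt (fun x => f x - g x) a b.
Proof. apply (ex_RInt_minus (V := R_CompleteNormedModule)). Qed.

Lemma RInt_lin3 (f g h : R -> R) a1 a2 a3 a b :
  ex_RInt f a b -> ex_RInt g a b -> ex_RInt h a b ->
  RInt (fun u => a1 * f u - a2 * g u + a3 * h u) a b
  = a1 * RInt f a b - a2 * RInt g a b + a3 * RInt h a b.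
Proof.
  intros Hf Hg Hh.
  rewrite RInt_Rplus, RInt_Rminus, !RInt_Rscal;
    auto using ex_RInt_Rscal, ex_RInt_Rminus.
Qed.

Lemma continuous_Rpower_l b y : 0 < y -> continuous (fun z => Rpower z b) y.
Proof.
  intros Hy; apply (ex_derive_continuous (V := R_NormedModule)); eexists.
  apply is_derive_Reals, derivable_pt_lim_power, Hy.
Qed.

Lemma Rpower_1_l b : Rpower 1 b = 1.
Proof. unfold Rpower; rewrite ln_1, Rmult_0_r; apply exp_0. Qed.

Lemma Rpower_half w : 0 < w -> Rpower w (1/2) = sqrt w.
Proof. intros Hw; replace (1/2) with (/ 2) by field; apply Rpower_sqrt, Hw. Qed.

Lemma Rpower_three_halves w : 0 < w -> Rpower w (3/2) = w * sqrt w.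
Proof.
  intros Hw; replace (3/2) with (1 + 1/2) by field.
  rewrite Rpower_plus, Rpower_1, Rpower_half by exact Hw; reflexivity.
Qed.

Lemma Rpower_neg_half w : 0 < w -> Rpower w (-1/2) = / sqrt w.
Proof.
  intros Hw; replace (-1/2) with (- (1/2)) by field.
  rewrite Rpower_Ropp, Rpower_half by exact Hw; reflexivity.
Qed.

Lemma Rpower_neg_three_halves w : 0 < w -> Rpower w (-3/2) = / (w * sqrt w).
Proof.
  intros Hw; replace (-3/2) with (- (3/2)) by field.
  rewrite Rpower_Ropp, Rpower_three_halves by exact Hw; reflexivity.
Qed.

Lemma Rpower_nonpos_antitone b v w : b <= 0 -> 0 < v <= w -> Rpower w b <= Rpower v b.
Proof.
  intros Hb Hvw; replace b with (- - b) by ring.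
  rewrite (Rpower_Ropp w (- b)), (Rpower_Ropp v (- b)).
  apply Rinv_le_contravar; [apply exp_pos | apply Rle_Rpower_l; lra].
Qed.

Lemma three_halves_bernoulli w : 0 <= w -> 1 - 3/2 * (1 - w) <= w * sqrt w.
Proof.
  intros Hw; assert (Hr := sqrt_pos w); assert (Hrr := sqrt_sqrt w Hw).
  assert (H := Rmult_le_pos _ _ (pow2_ge_0 (sqrt w - 1)) (ltac:(lra) : 0 <= sqrt w + 1/2)).
  nra.
Qed.

Lemma half_bernoulli w : 0 <= w -> sqrt w <= 1 - (1 - w) / 2.
Proof. intros Hw; assert (Hrr := sqrt_sqrt w Hw); pose proof (pow2_ge_0 (sqrt w - 1)); nra. Qed.

Lemma inv_sq_bounds y : 1 < y -> 0 < / y ^ 2 < 1.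
Proof.
  intros Hy; split; [apply Rinv_0_lt_compat; nra |].
  rewrite <- Rinv_1; apply Rinv_lt_contravar; nra.
Qed.

Lemma is_derive_inv_sq y : y <> 0 -> is_derive (fun z => / z ^ 2) y (-2 / y ^ 3).
Proof.
  intros Hy; auto_derive; [| field; exact Hy].
  rewrite Rmult_1_r; now apply Rmult_integral_contrapositive.
Qed.

Lemma inv_pow_inv t n : / (/ t) ^ n = t ^ n.
Proof. rewrite pow_inv, Rinv_inv; reflexivity. Qed.

Lemma div_pow_inv a t n : a / (/ t) ^ n = a * t ^ n.
Proof. unfold Rdiv; rewrite inv_pow_inv; reflexivity. Qed.

Lemma sin_pow2_bounds u : 0 <= sin u ^ 2 <= 1.
Proof. pose proof (SIN_bound u); split; nra. Qed.

Lemma one_sub_sin2_pos c u : c < 1 -> 0 < 1 - c * sin u ^ 2.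
Proof. intros Hc; pose proof (sin_pow2_bounds u); destruct (Rle_dec c 0); nra. Qed.

Lemma sin_pos_quarter_period u : 0 < u < PI / 2 -> 0 < sin u.
Proof. intros Hu; apply sin_gt_0; lra. Qed.

Lemma continuous_sin_pow k u : continuous (fun v => sin v ^ k) u.
Proof. apply (ex_derive_continuous (V := R_NormedModule)); auto_derive; auto. Qed.

Lemma ex_RInt_sin_pow k : ex_RInt (fun u => sin u ^ k) 0 (PI / 2).
Proof.
  apply (ex_RInt_continuous (V := R_CompleteNormedModule)); intros u _; apply continuous_sin_pow.
Qed.

Lemma RInt_le_quarter_period (f g : R -> R) :
  ex_RInt f 0 (PI / 2) -> ex_RInt g 0 (PI / 2) ->
  (forall u, 0 < u < PI / 2 -> f u <= g u) -> RInt f 0 (PI / 2) <= RInt g 0 (PI / 2).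
Proof. intros Hf Hg H; apply RInt_le; auto; pose proof PI_RGT_0; lra. Qed.

(** * The integrals J *)

Definition J (k : nat) (b c : R) : R :=
  RInt (fun u => sin u ^ k * Rpower (1 - c * sin u ^ 2) b) 0 (PI / 2).

Lemma continuous_J_integrand k b c u : c < 1 ->
  continuous (fun v => sin v ^ k * Rpower (1 - c * sin v ^ 2) b) u.
Proof.
  intros Hc.
  apply (continuous_mult (fun v => sin v ^ k)); [apply continuous_sin_pow |].
  apply (continuous_comp (fun v => 1 - c * sin v ^ 2) (fun y => Rpower y b)).
  - apply (ex_derive_continuous (V := R_NormedModule)); auto_derive; auto.
  - apply continuous_Rpower_l, one_sub_sin2_pos, Hc.
Qed.

Lemma ex_RInt_J k b c : c < 1 ->
  ex_RInt (fun u => sin u ^ k * Rpower (1 - c * sin u ^ 2) b) 0 (PI / 2).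
Proof.
  intros Hc; apply (ex_RInt_continuous (V := R_CompleteNormedModule)).
  intros u _; apply continuous_J_integrand, Hc.
Qed.

Lemma continuity_2d_J_integrand k b c v : c < 1 ->
  continuity_2d_pt (fun z u => sin u ^ k * Rpower (1 - z * sin u ^ 2) b) c v.
Proof.
  intros Hc.
  assert (cont_u : forall h : R -> R,
    continuity_pt h v -> continuity_2d_pt (fun _ u => h u) c v).
  { intros h Hh; apply (continuity_1d_2d_pt_comp h (fun _ u => u)); auto.
    apply continuity_2d_pt_id2. }
  assert (cont_sin : forall n, continuity_pt (fun u => sin u ^ n) v).
  { intros n; apply continuity_pt_filterlim, continuous_sin_pow. }
  apply continuity_2d_pt_mult; [apply cont_u, cont_sin |].
  apply (continuity_1d_2d_pt_comp (fun y => Rpower y b) (fun z u => 1 - z * sin u ^ 2)).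
  - apply continuity_pt_filterlim, continuous_Rpower_l, one_sub_sin2_pos, Hc.
  - apply continuity_2d_pt_minus; [apply continuity_2d_pt_const |].
    apply continuity_2d_pt_mult; [apply continuity_2d_pt_id1 | apply cont_u, cont_sin].
Qed.

Lemma is_derive_J_integrand k b c v : c < 1 ->
  is_derive (fun z => sin v ^ k * Rpower (1 - z * sin v ^ 2) b) c
    (- b * (sin v ^ (k + 2) * Rpower (1 - c * sin v ^ 2) (b - 1))).
Proof.
  intros Hc.
  assert (Hpow := derivable_pt_lim_power _ b (one_sub_sin2_pos c v Hc)).
  apply is_derive_Reals in Hpow.
  assert (Hin : is_derive (fun z => 1 - z * sin v ^ 2) c (- sin v ^ 2))
    by (auto_derive; [auto | ring]).
  assert (H := is_derive_comp (fun y => Rpower y b) (fun z => 1 - z * sin v ^ 2) _ _ _ Hpow Hin).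
  eapply is_derive_eq; [apply is_derive_scal, H |].
  rewrite pow_add; unfold scal; simpl; unfold mult; simpl; ring.
Qed.

Lemma is_derive_J k b c : c < 1 -> is_derive (J k b) c (- b * J (k + 2) (b - 1) c).
Proof.
  intros Hc; unfold J.
  assert (near_c : locally c (fun z => z < 1)) by (apply open_lt, Hc).
  assert (HD : forall z u, z < 1 ->
    Derive (fun y => sin u ^ k * Rpower (1 - y * sin u ^ 2) b) z
    = - b * (sin u ^ (k + 2) * Rpower (1 - z * sin u ^ 2) (b - 1))).
  { intros z u Hz; apply is_derive_unique, is_derive_J_integrand, Hz. }
  eapply is_derive_eq; [apply is_derive_RInt_param |].
  - apply (filter_imp (fun z => z < 1)); [| exact near_c].
    intros z Hz u _; eexists; apply is_derive_J_integrand, Hz.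
  - intros u _.
    apply (continuity_2d_pt_ext_loc
      (fun z u => - b * (sin u ^ (k + 2) * Rpower (1 - z * sin u ^ 2) (b - 1)))).
    + assert (Hp : 0 < 1 - c) by lra.
      exists (mkposreal _ Hp); intros z w Hz _; simpl in Hz.
      apply Rabs_lt_between' in Hz; rewrite HD; lra.
    + apply continuity_2d_pt_mult; [apply continuity_2d_pt_const |].
      apply continuity_2d_J_integrand, Hc.
  - apply (filter_imp (fun z => z < 1)); [| exact near_c].
    intros z Hz; apply ex_RInt_J, Hz.
  - rewrite <- (RInt_scal (V := R_CompleteNormedModule)); [| apply ex_RInt_J, Hc].
    apply RInt_ext; intros u _; rewrite HD; auto.
Qed.

Lemma is_derive_J_reflected k b c : 0 < c ->
  is_derive (fun z => J k b (1 - z)) c (b * J (k + 2) (b - 1) (1 - c)).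
Proof.
  intros Hc; eapply is_derive_eq.
  - apply (is_derive_comp (J k b) (fun z => 1 - z)); [apply is_derive_J; lra |].
    auto_derive; [auto | reflexivity].
  - unfold scal; simpl; unfold mult; simpl; ring.
Qed.

Lemma J_lower k b c : c < 1 -> J k b c = J k (b - 1) c - c * J (k + 2) (b - 1) c.
Proof.
  intros Hc; unfold J.
  rewrite <- RInt_Rscal, <- RInt_Rminus by auto using ex_RInt_J, ex_RInt_Rscal.
  apply RInt_extR; intros u _.
  replace b with (b - 1 + 1) at 1 by ring.
  rewrite Rpower_plus, Rpower_1 by (apply one_sub_sin2_pos, Hc).
  rewrite pow_add; ring.
Qed.

Lemma J_contiguous k b c : c < 1 ->
  (INR k + 1) * J k b c - (INR k + 2 + (INR k + 3 + 2 * b) * c) * J (k + 2) b c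
  + (INR k + 4 + 2 * b) * c * J (k + 4) b c = 0.
Proof.
  intros Hc.
  set (h u := sin u ^ (k + 1) * cos u * Rpower (1 - c * sin u ^ 2) (b + 1)).
  set (g m u := sin u ^ m * Rpower (1 - c * sin u ^ 2) b).
  assert (Hh : forall u, is_derive h u ((INR k + 1) * g k u
      - (INR k + 2 + (INR k + 3 + 2 * b) * c) * g (k + 2)%nat u
      + (INR k + 4 + 2 * b) * c * g (k + 4)%nat u)).
  { intros u; unfold h, g.
    assert (Hw := one_sub_sin2_pos c u Hc).
    assert (Hpow := derivable_pt_lim_power _ (b + 1) Hw).
    apply is_derive_Reals, is_derive_unique in Hpow.
    auto_derive.
    { eexists; apply is_derive_Reals, derivable_pt_lim_power; lra. }
    replace (1 + - (c * (sin u * (sin u * 1)))) with (1 - c * sin u ^ 2) by ring.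
    rewrite Hpow, Rpower_plus, Rpower_1 by lra.
    replace (b + 1 - 1) with b by ring.
    rewrite !pow_add, plus_INR, S_INR.
    replace (Init.Nat.pred (k + 1)) with k by lia.
    assert (Hsc := sin2_cos2 u); unfold Rsqr in Hsc.
    generalize (Rpower (1 - c * sin u ^ 2) b) (sin u ^ k); intros P Sk.
    simpl; nsatz. }
  assert (HI := is_RInt_derive (V := R_CompleteNormedModule) h _ 0 (PI / 2) (fun u _ => Hh u)).
  apply is_RInt_unique in HI.
  - unfold J; fold (g k) (g (k + 2)%nat) (g (k + 4)%nat).
    rewrite <- RInt_lin3 by apply ex_RInt_J, Hc.
    rewrite HI; unfold h; rewrite cos_PI2, sin_0, pow_i by lia.
    unfold minus, plus, opp; simpl; ring.
  - intros u _.
    assert (Hg : forall m l, continuous (fun v => l * g m v) u).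
    { intros m l; apply (continuous_mult (fun _ => l) (g m));
        [apply continuous_const | apply continuous_J_integrand, Hc]. }
    apply (continuous_plus (fun v => (INR k + 1) * g k v - _ * g (k + 2)%nat v)
      (fun v => _ * g (k + 4)%nat v)), Hg.
    apply (continuous_minus (fun v => (INR k + 1) * g k v) (fun v => _ * g (k + 2)%nat v));
      apply Hg.
Qed.

Definition wallis (k : nat) : R := RInt (fun u => sin u ^ k) 0 (PI / 2).

Lemma J_at_0 k b : J k b 0 = wallis k.
Proof.
  apply RInt_extR; intros u _.
  rewrite Rmult_0_l, Rminus_0_r, Rpower_1_l; ring.
Qed.

Lemma wallis_rec k : (INR k + 1) * wallis k = (INR k + 2) * wallis (k + 2).
Proof.
  assert (H := J_contiguous k 0 0 Rlt_0_1); rewrite !J_at_0 in H; lra.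
Qed.

Lemma wallis_0 : wallis 0 = PI / 2.
Proof.
  unfold wallis; rewrite (RInt_extR _ (fun _ => 1)) by reflexivity.
  rewrite RInt_const; unfold scal; simpl; unfold mult; simpl; ring.
Qed.

Lemma wallis_2 : wallis 2 = PI / 4.
Proof. assert (H := wallis_rec 0); rewrite wallis_0 in H; simpl in H; lra. Qed.

Lemma wallis_4 : wallis 4 = 3 * PI / 16.
Proof. assert (H := wallis_rec 2); rewrite wallis_2 in H; simpl in H; lra. Qed.

Lemma wallis_6 : wallis 6 = 5 * PI / 32.
Proof. assert (H := wallis_rec 4); rewrite wallis_4 in H; simpl in H; lra. Qed.

Lemma J_hypergeometric_1 c : c < 1 ->
  c * (1 - c) * J 4 (-1/2) c - 2 * J 2 (1/2) c + J 0 (3/2) c = 0.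
Proof.
  intros Hc.
  assert (C := J_contiguous 0 (-1/2) c Hc).
  assert (L1 := J_lower 2 (1/2) c Hc).
  assert (L2 := J_lower 0 (3/2) c Hc).
  assert (L3 := J_lower 0 (1/2) c Hc).
  replace (3/2 - 1) with (1/2) in L2 by field.
  replace (1/2 - 1) with (-1/2) in L1, L3 by field.
  simpl in *; rewrite L2, L3, L1; lra.
Qed.

Lemma J_hypergeometric_2 c : c < 1 ->
  3 * c * (1 - c) * J 8 (-5/2) c + 2 * (3 - 4 * c) * J 6 (-3/2) c - 5 * J 4 (-1/2) c = 0.
Proof.
  intros Hc.
  assert (C := J_contiguous 4 (-5/2) c Hc).
  assert (L1 := J_lower 6 (-3/2) c Hc).
  assert (L2 := J_lower 4 (-1/2) c Hc).
  assert (L3 := J_lower 4 (-3/2) c Hc).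
  replace (-1/2 - 1) with (-3/2) in L2 by field.
  replace (-3/2 - 1) with (-5/2) in L1, L3 by field.
  simpl in *; rewrite L2, L3, L1; lra.
Qed.

Lemma J_nonneg k b c : c < 1 -> 0 <= J k b c.
Proof.
  intros Hc.
  replace 0 with (RInt (fun _ => 0) 0 (PI / 2)) at 1
    by (rewrite RInt_const; unfold scal; simpl; unfold mult; simpl; ring).
  apply RInt_le_quarter_period; [apply ex_RInt_const | apply ex_RInt_J, Hc |].
  intros u Hu; apply Rmult_le_pos.
  - apply pow_le; left; apply sin_pos_quarter_period, Hu.
  - left; apply exp_pos.
Qed.

Lemma J_0_three_halves_lower c : c < 1 -> wallis 0 - 3/2 * c * wallis 2 <= J 0 (3/2) c.
Proof.
  intros Hc; unfold wallis.
  rewrite <- RInt_Rscal, <- RInt_Rminus by auto using ex_RInt_sin_pow, ex_RInt_Rscal.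
  apply RInt_le_quarter_period;
    auto using ex_RInt_Rminus, ex_RInt_sin_pow, ex_RInt_Rscal, ex_RInt_J.
  intros u _; assert (Hw := one_sub_sin2_pos c u Hc).
  rewrite Rpower_three_halves by exact Hw.
  assert (H := three_halves_bernoulli _ (Rlt_le _ _ Hw)); simpl in *; lra.
Qed.

Lemma J_2_half_upper c : c < 1 -> J 2 (1/2) c <= wallis 2 - c / 2 * wallis 4.
Proof.
  intros Hc; unfold wallis.
  rewrite <- RInt_Rscal, <- RInt_Rminus by auto using ex_RInt_sin_pow, ex_RInt_Rscal.
  apply RInt_le_quarter_period;
    auto using ex_RInt_Rminus, ex_RInt_sin_pow, ex_RInt_Rscal, ex_RInt_J.
  intros u _; assert (Hw := one_sub_sin2_pos c u Hc).
  rewrite Rpower_half by exact Hw.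
  assert (H := Rmult_le_compat_l _ _ _ (proj1 (sin_pow2_bounds u))
                 (half_bernoulli _ (Rlt_le _ _ Hw))).
  replace (sin u ^ 4) with (sin u ^ 2 * sin u ^ 2) by ring; lra.
Qed.

Lemma J_nonpos_exponent_bounds k b c : 0 <= c < 1 -> b <= 0 ->
  wallis k <= J k b c <= Rpower (1 - c) b * wallis k.
Proof.
  intros Hc Hb; unfold wallis.
  assert (Hweight : forall u, 0 < u < PI / 2 ->
    sin u ^ k <= sin u ^ k * Rpower (1 - c * sin u ^ 2) b <= Rpower (1 - c) b * sin u ^ k).
  { intros u Hu.
    assert (Hk := pow_le _ k (Rlt_le _ _ (sin_pos_quarter_period u Hu))).
    assert (Hs := sin_pow2_bounds u).
    assert (Hw := one_sub_sin2_pos c u (proj2 Hc)).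
    assert (H1 : 1 <= Rpower (1 - c * sin u ^ 2) b)
      by (rewrite <- (Rpower_1_l b) at 1; apply Rpower_nonpos_antitone; nra).
    assert (H2 : Rpower (1 - c * sin u ^ 2) b <= Rpower (1 - c) b)
      by (apply Rpower_nonpos_antitone; nra).
    split; nra. }
  split.
  - apply RInt_le_quarter_period; [apply ex_RInt_sin_pow | apply ex_RInt_J; lra |].
    intros u Hu; apply (Hweight u Hu).
  - rewrite <- RInt_Rscal by apply ex_RInt_sin_pow.
    apply RInt_le_quarter_period; [apply ex_RInt_J; lra | apply ex_RInt_Rscal, ex_RInt_sin_pow |].
    intros u Hu; apply (Hweight u Hu).
Qed.

(** * Gauss's equation in the variable x^-2 *)

Definition solves_hypergeometric (F dF ddF : R -> R) : Prop :=
  forall c, 0 < c < 1 ->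
    is_derive F c (dF c) /\ is_derive dF c (ddF c) /\
    c * (1 - c) * ddF c + dF c + 3/4 * F c = 0.

Section HypergeometricPullback.

Variables F dF ddF psi : R -> R.
Hypothesis F_hyp : solves_hypergeometric F dF ddF.
Hypothesis psi_def : forall y, 1 < y -> psi y = F (/ y ^ 2).

Lemma pullback_is_derive y : 1 < y -> is_derive psi y (-2 / y ^ 3 * dF (/ y ^ 2)).
Proof.
  intros Hy.
  apply (is_derive_ext_loc (fun z => F (/ z ^ 2))).
  { apply (filter_imp (fun z => 1 < z)); [| apply open_gt, Hy].
    intros z Hz; symmetry; apply psi_def, Hz. }
  eapply is_derive_eq.
  - apply (is_derive_comp F (fun z => / z ^ 2)).
    + apply F_hyp, inv_sq_bounds, Hy.
    + apply is_derive_inv_sq; lra.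
  - unfold scal; simpl; unfold mult; simpl; ring.
Qed.

Lemma pullback_Derive y : 1 < y -> Derive psi y = -2 / y ^ 3 * dF (/ y ^ 2).
Proof. intros Hy; apply is_derive_unique, pullback_is_derive, Hy. Qed.

Lemma pullback_ode x : 1 < x ->
  is_derive (Derive psi) x
    ((3 - x ^ 2) / (x * (x ^ 2 - 1)) * Derive psi x + -3 / (x ^ 2 * (x ^ 2 - 1)) * psi x).
Proof.
  intros Hx.
  assert (Hs := inv_sq_bounds x Hx).
  apply (is_derive_ext_loc (fun z => -2 / z ^ 3 * dF (/ z ^ 2))).
  { apply (filter_imp (fun z => 1 < z)); [| apply open_gt, Hx].
    intros z Hz; symmetry; apply pullback_Derive, Hz. }
  eapply is_derive_eq.
  - apply (is_derive_mult (fun z => -2 / z ^ 3) (fun z => dF (/ z ^ 2))).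
    + auto_derive; [assert (x * (x * (x * 1)) > 0) by nra; lra | reflexivity].
    + apply (is_derive_comp dF (fun z => / z ^ 2)); [apply F_hyp, Hs |].
      apply is_derive_inv_sq; lra.
    + intros; apply Rmult_comm.
  - rewrite pullback_Derive, psi_def by exact Hx.
    assert (Hode := proj2 (proj2 (F_hyp _ Hs))).
    assert (Hx2 : x ^ 2 - 1 <> 0) by nra.
    assert (Hc : / x ^ 2 * (1 - / x ^ 2) <> 0) by nra.
    replace (ddF (/ x ^ 2)) with (- (dF (/ x ^ 2) + 3/4 * F (/ x ^ 2)) / (/ x ^ 2 * (1 - / x ^ 2))).
    2:{ unfold Rdiv; apply (Rmult_eq_reg_r (/ x ^ 2 * (1 - / x ^ 2))); [| exact Hc].
        rewrite Rmult_assoc, Rinv_l by exact Hc; lra. }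
    unfold plus, scal, mult; simpl; unfold mult; simpl.
    field; lra.
Qed.

End HypergeometricPullback.

(** * Two solutions of a common linear equation *)

Definition cross_deriv (p1 p2 : R -> R) (y : R) : R := Derive p2 y * p1 y - Derive p1 y * p2 y.

Definition dot_deriv (p1 p2 : R -> R) (y : R) : R := Derive p2 y * p2 y + Derive p1 y * p1 y.

Section CommonLinearODE.

Variables (p1 p2 : R -> R) (a b x : R).
Hypothesis p1_ex : ex_derive p1 x.
Hypothesis p2_ex : ex_derive p2 x.
Hypothesis p1_ode : is_derive (Derive p1) x (a * Derive p1 x + b * p1 x).
Hypothesis p2_ode : is_derive (Derive p2) x (a * Derive p2 x + b * p2 x).

Lemma is_derive_cross_deriv : is_derive (cross_deriv p1 p2) x (a * cross_deriv p1 p2 x).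
Proof.
  eapply is_derive_eq.
  - apply (is_derive_minus (fun y => Derive p2 y * p1 y) (fun y => Derive p1 y * p2 y));
      (apply (is_derive_mult (Derive _)); [eassumption | apply Derive_correct; assumption |];
       intros; apply Rmult_comm).
  - unfold cross_deriv, minus, plus, opp, mult; simpl; unfold plus, opp, mult; simpl; ring.
Qed.

Lemma is_derive_dot_deriv : is_derive (dot_deriv p1 p2) x
  (a * dot_deriv p1 p2 x + b * (p1 x ^ 2 + p2 x ^ 2) + (Derive p1 x ^ 2 + Derive p2 x ^ 2)).
Proof.
  eapply is_derive_eq.
  - apply (is_derive_plus (fun y => Derive p2 y * p2 y) (fun y => Derive p1 y * p1 y));
      (apply (is_derive_mult (Derive _)); [eassumption | apply Derive_correct; assumption |];
       intros; apply Rmult_comm).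
  - unfold dot_deriv, plus, mult; simpl; unfold plus, mult; simpl; ring.
Qed.

Lemma cross_dot_wronskian :
  Derive (cross_deriv p1 p2) x * dot_deriv p1 p2 x
  - cross_deriv p1 p2 x * Derive (dot_deriv p1 p2) x
  = - cross_deriv p1 p2 x * (b * (p1 x ^ 2 + p2 x ^ 2) + (Derive p1 x ^ 2 + Derive p2 x ^ 2)).
Proof.
  rewrite (is_derive_unique _ _ _ is_derive_cross_deriv).
  rewrite (is_derive_unique _ _ _ is_derive_dot_deriv).
  ring.
Qed.

End CommonLinearODE.

Lemma ratio_decreasing (W Q : R -> R) x y : x < y ->
  (forall z, x <= z <= y ->
     ex_derive W z /\ ex_derive Q z /\ W z <> 0 /\ 0 < Derive W z * Q z - W z * Derive Q z) ->
  Q y / W y < Q x / W x.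
Proof.
  intros Hxy H.
  set (d z := (Derive Q z * W z - Q z * Derive W z) / W z ^ 2).
  assert (Hd : forall z, x <= z <= y -> is_derive (fun t => Q t / W t) z (d z)).
  { intros z Hz; destruct (H z Hz) as (HW & HQ & HW0 & _).
    apply is_derive_div; auto using Derive_correct. }
  destruct (MVT_gen (fun t => Q t / W t) x y d) as (c & Hc & Hmvt).
  - intros z Hz; rewrite Rmin_left, Rmax_right in Hz by lra; apply Hd; lra.
  - intros z Hz; rewrite Rmin_left, Rmax_right in Hz by lra.
    apply continuity_pt_filterlim.
    apply (ex_derive_continuous (V := R_NormedModule) (fun t => Q t / W t)).
    eexists; apply Hd, Hz.
  - rewrite Rmin_left, Rmax_right in Hc by lra.
    destruct (H c Hc) as (_ & _ & HW0 & Hpos).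
    assert (d c < 0).
    { assert (0 < W c ^ 2) by (apply pow2_gt_0, HW0).
      unfold d, Rdiv; apply Rmult_neg_pos; [lra | apply Rinv_0_lt_compat; lra]. }
    nra.
Qed.

Lemma psi1_as_J x : 1 < x -> psi1 x = 3/2 * J 0 (3/2) (/ x ^ 2).
Proof.
  intros Hx; unfold psi1, J; f_equal; apply RInt_extR; intros u _.
  assert (Hw := one_sub_sin2_pos _ u (proj2 (inv_sq_bounds x Hx))).
  rewrite Rpower_three_halves by exact Hw.
  replace (sin u ^ 2 / x ^ 2) with (/ x ^ 2 * sin u ^ 2) by (unfold Rdiv; ring).
  simpl; ring.
Qed.

Lemma psi2_as_J x : 1 < x -> psi2 x = 3/2 * (1 - / x ^ 2) ^ 2 * J 4 (-1/2) (1 - / x ^ 2).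
Proof.
  intros Hx; unfold psi2, J; f_equal; apply RInt_extR; intros u _.
  assert (Hs := inv_sq_bounds x Hx).
  rewrite Rpower_neg_half by (apply one_sub_sin2_pos; lra); reflexivity.
Qed.

Lemma hypergeometric_J_0_3_2 :
  solves_hypergeometric (fun c => 3/2 * J 0 (3/2) c) (fun c => -9/4 * J 2 (1/2) c)
    (fun c => 9/8 * J 4 (-1/2) c).
Proof.
  intros c Hc; split; [| split].
  - eapply is_derive_eq; [apply is_derive_scal, is_derive_J; lra |].
    replace (3/2 - 1) with (1/2) by field; simpl; field.
  - eapply is_derive_eq; [apply is_derive_scal, is_derive_J; lra |].
    replace (1/2 - 1) with (-1/2) by field; simpl; field.
  - assert (H := J_hypergeometric_1 c (proj2 Hc)); lra.
Qed.

Lemma hypergeometric_J_4_reflected :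
  solves_hypergeometric
    (fun c => 3/2 * (1 - c) ^ 2 * J 4 (-1/2) (1 - c))
    (fun c => -3 * (1 - c) * J 4 (-1/2) (1 - c) - 3/4 * (1 - c) ^ 2 * J 6 (-3/2) (1 - c))
    (fun c => 3 * J 4 (-1/2) (1 - c) + 3 * (1 - c) * J 6 (-3/2) (1 - c)
              + 9/8 * (1 - c) ^ 2 * J 8 (-5/2) (1 - c)).
Proof.
  intros c Hc.
  assert (D4 := is_derive_J_reflected 4 (-1/2) c (proj1 Hc)).
  assert (D6 := is_derive_J_reflected 6 (-3/2) c (proj1 Hc)).
  replace (-1/2 - 1) with (-3/2) in D4 by field.
  replace (-3/2 - 1) with (-5/2) in D6 by field.
  simpl in D4, D6.
  split; [| split].
  - eapply is_derive_eq.
    + apply (is_derive_mult (fun z => 3/2 * (1 - z) ^ 2) (fun z => J 4 (-1/2) (1 - z)));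
        [auto_derive; [auto | reflexivity] | exact D4 | intros; apply Rmult_comm].
    + unfold plus, mult; simpl; unfold plus, mult; simpl; field.
  - eapply is_derive_eq.
    + apply (is_derive_minus (fun z => -3 * (1 - z) * J 4 (-1/2) (1 - z))
                             (fun z => 3/4 * (1 - z) ^ 2 * J 6 (-3/2) (1 - z))).
      * apply (is_derive_mult (fun z => -3 * (1 - z)));
          [auto_derive; [auto | reflexivity] | exact D4 | intros; apply Rmult_comm].
      * apply (is_derive_mult (fun z => 3/4 * (1 - z) ^ 2));
          [auto_derive; [auto | reflexivity] | exact D6 | intros; apply Rmult_comm].
    + unfold minus, plus, opp, mult; simpl; unfold plus, opp, mult; simpl; field.
  - assert (H := J_hypergeometric_2 (1 - c) ltac:(lra)).
    replace (1 - (1 - c)) with c in H by ring.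
    nra.
Qed.

Lemma psi1_Derive x : 1 < x -> Derive psi1 x = 9/2 / x ^ 3 * J 2 (1/2) (/ x ^ 2).
Proof.
  intros Hx; rewrite (pullback_Derive _ _ _ _ hypergeometric_J_0_3_2 psi1_as_J x Hx).
  field; lra.
Qed.

Lemma psi2_Derive x : 1 < x ->
  Derive psi2 x = 6 * (1 - / x ^ 2) / x ^ 3 * J 4 (-1/2) (1 - / x ^ 2)
                + 3/2 * (1 - / x ^ 2) ^ 2 / x ^ 3 * J 6 (-3/2) (1 - / x ^ 2).
Proof.
  intros Hx; rewrite (pullback_Derive _ _ _ _ hypergeometric_J_4_reflected psi2_as_J x Hx).
  field; lra.
Qed.

Lemma psi_common_ode x : 1 < x ->
  let a := (3 - x ^ 2) / (x * (x ^ 2 - 1)) in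
  let b := -3 / (x ^ 2 * (x ^ 2 - 1)) in
  ex_derive psi1 x /\ ex_derive psi2 x /\
  is_derive (Derive psi1) x (a * Derive psi1 x + b * psi1 x) /\
  is_derive (Derive psi2) x (a * Derive psi2 x + b * psi2 x).
Proof.
  intros Hx a b; split; [| split; [| split]].
  - eexists; apply (pullback_is_derive _ _ _ _ hypergeometric_J_0_3_2 psi1_as_J x Hx).
  - eexists; apply (pullback_is_derive _ _ _ _ hypergeometric_J_4_reflected psi2_as_J x Hx).
  - apply (pullback_ode _ _ _ _ hypergeometric_J_0_3_2 psi1_as_J x Hx).
  - apply (pullback_ode _ _ _ _ hypergeometric_J_4_reflected psi2_as_J x Hx).
Qed.

(** * Numerical estimates on (1, 1.732] *)

Lemma psi1_estimates t : 0 < t < 1 ->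
  PI * (12 - 9 * t ^ 2) <= 16 * psi1 (/ t) /\
  0 <= 64 * Derive psi1 (/ t) <= PI * (9 * t ^ 3 * (8 - 3 * t ^ 2)).
Proof.
  intros Ht.
  assert (Hx : 1 < / t) by (rewrite <- Rinv_1; apply Rinv_lt_contravar; lra).
  rewrite psi1_as_J, psi1_Derive by exact Hx.
  rewrite !div_pow_inv, !inv_pow_inv.
  assert (Ht2 : t ^ 2 < 1) by nra.
  assert (L := J_0_three_halves_lower _ Ht2).
  assert (U := J_2_half_upper _ Ht2).
  assert (N := J_nonneg 2 (1/2) _ Ht2).
  rewrite wallis_0, wallis_2 in L; rewrite wallis_2, wallis_4 in U.
  assert (0 < t ^ 3) by (apply pow_lt; lra).
  split; [lra | split]; nra.
Qed.

Lemma psi2_estimates t : 0 < t < 1 ->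
  PI * (9 * (1 - t ^ 2) ^ 2) <= 32 * psi2 (/ t) /\
  32 * psi2 (/ t) * t <= PI * (9 * (1 - t ^ 2) ^ 2) /\
  PI * (t ^ 3 * (1 - t ^ 2) * (72 + 15 * (1 - t ^ 2))) <= 64 * Derive psi2 (/ t) /\
  64 * Derive psi2 (/ t) <= PI * ((1 - t ^ 2) * (72 * t ^ 2 + 15 * (1 - t ^ 2))).
Proof.
  intros Ht.
  assert (Hx : 1 < / t) by (rewrite <- Rinv_1; apply Rinv_lt_contravar; lra).
  rewrite psi2_as_J, psi2_Derive by exact Hx.
  rewrite !div_pow_inv, !inv_pow_inv.
  assert (Hn : 0 <= 1 - t ^ 2 < 1) by nra.
  assert (Hw : 1 - (1 - t ^ 2) = t ^ 2) by ring.
  assert (B4 := J_nonpos_exponent_bounds 4 (-1/2) _ Hn ltac:(lra)).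
  assert (B6 := J_nonpos_exponent_bounds 6 (-3/2) _ Hn ltac:(lra)).
  rewrite Hw, wallis_4 in B4; rewrite Hw, wallis_6 in B6.
  rewrite Rpower_neg_half, sqrt_pow2 in B4 by nra.
  rewrite Rpower_neg_three_halves, sqrt_pow2 in B6 by nra.
  set (J4 := J 4 (-1/2) (1 - t ^ 2)) in *; set (J6 := J 6 (-3/2) (1 - t ^ 2)) in *.
  assert (A4 : J4 * t <= 3 * PI / 16).
  { replace (3 * PI / 16) with (/ t * (3 * PI / 16) * t) by (field; lra).
    apply Rmult_le_compat_r; lra. }
  assert (A6 : J6 * t ^ 3 <= 5 * PI / 32).
  { replace (5 * PI / 32) with (/ (t ^ 2 * t) * (5 * PI / 32) * t ^ 3) by (field; lra).
    apply Rmult_le_compat_r; [apply pow_le |]; lra. }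
  assert (Hn2 : 0 <= (1 - t ^ 2) ^ 2) by apply pow2_ge_0.
  assert (Ht3 : 0 < t ^ 3) by (apply pow_lt; lra).
  split; [| split; [| split]].
  - nra.
  - nra.
  - assert (L4 : (1 - t ^ 2) * t ^ 3 * (3 * PI / 16) <= (1 - t ^ 2) * t ^ 3 * J4)
      by (apply Rmult_le_compat_l; nra).
    assert (L6 : (1 - t ^ 2) ^ 2 * t ^ 3 * (5 * PI / 32) <= (1 - t ^ 2) ^ 2 * t ^ 3 * J6)
      by (apply Rmult_le_compat_l; nra).
    lra.
  - assert (U4 : (1 - t ^ 2) * t ^ 2 * (J4 * t) <= (1 - t ^ 2) * t ^ 2 * (3 * PI / 16))
      by (apply Rmult_le_compat_l; nra).
    assert (U6 : (1 - t ^ 2) ^ 2 * (J6 * t ^ 3) <= (1 - t ^ 2) ^ 2 * (5 * PI / 32))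
      by (apply Rmult_le_compat_l; nra).
    lra.
Qed.

(* Bernstein certificates on [[4/7, 1]]: in [u = 7t - 4] and [w = 7 - 7t], both nonnegative
   there, a positive multiple of the polynomial minus a positive constant has an expansion in
   the monomials [u^j w^(m-j)] with nonnegative coefficients. *)
Ltac bernstein_nonneg :=
  repeat first [ lra | apply Rplus_le_le_0_compat | apply Rmult_le_pos | apply pow_le ].

Lemma cross_polynomial_pos t : 4/7 <= t <= 1 ->
  0 < 2 * t * (72 + 15 * (1 - t ^ 2)) * (12 - 9 * t ^ 2) - 81 * (8 - 3 * t ^ 2) * (1 - t ^ 2).
Proof.
  intros Ht.
  match goal with |- 0 < ?q => enough (0 <= 151263 * (q - 432)) by lra end.
  match goal with |- 0 <= ?e => replace e with
     (21944 * (7 - 7 * t) ^ 5 + 425096 * (7 * t - 4) * (7 - 7 * t) ^ 4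
      + 1208487 * (7 * t - 4) ^ 2 * (7 - 7 * t) ^ 3 + 1215935 * (7 * t - 4) ^ 3 * (7 - 7 * t) ^ 2
      + 408170 * (7 * t - 4) ^ 4 * (7 - 7 * t)) by ring end.
  bernstein_nonneg.
Qed.

Lemma energy_polynomial_pos t : 4/7 <= t <= 1 ->
  0 < 3 * t ^ 4 * (16 * (12 - 9 * t ^ 2) ^ 2 + 4 * (9 * (1 - t ^ 2) ^ 2) ^ 2)
      - (1 - t ^ 2) * ((9 * t ^ 3 * (8 - 3 * t ^ 2)) ^ 2
                       + ((1 - t ^ 2) * (72 * t ^ 2 + 15 * (1 - t ^ 2))) ^ 2).
Proof.
  intros Ht.
  match goal with |- 0 < ?q => enough (0 <= 1050832501626663 * (q - 2)) by lra end.
  match goal with |- 0 <= ?e => replace e with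
     (1618457419 * (7 - 7 * t) ^ 12
       + 1441933033548 * (7 * t - 4) * (7 - 7 * t) ^ 11
       + 16349750780601 * (7 * t - 4) ^ 2 * (7 - 7 * t) ^ 10
       + 83438850716410 * (7 * t - 4) ^ 3 * (7 - 7 * t) ^ 9
       + 251595197148330 * (7 * t - 4) ^ 4 * (7 - 7 * t) ^ 8
       + 496618013797920 * (7 * t - 4) ^ 5 * (7 - 7 * t) ^ 7
       + 672008439082344 * (7 * t - 4) ^ 6 * (7 - 7 * t) ^ 6
       + 634425355375056 * (7 * t - 4) ^ 7 * (7 - 7 * t) ^ 5
       + 416903597619390 * (7 * t - 4) ^ 8 * (7 - 7 * t) ^ 4
       + 186812296469680 * (7 * t - 4) ^ 9 * (7 - 7 * t) ^ 3
       + 54727360045365 * (7 * t - 4) ^ 10 * (7 - 7 * t) ^ 2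
       + 9699635100162 * (7 * t - 4) ^ 11 * (7 - 7 * t)
       + 850250499490 * (7 * t - 4) ^ 12) by ring end.
  bernstein_nonneg.
Qed.

Lemma cross_certificate k t P1 D1 P2 D2 : 0 < k -> 4/7 <= t < 1 ->
  k * (12 - 9 * t ^ 2) <= P1 ->
  0 <= D1 <= k * (9 * t ^ 3 * (8 - 3 * t ^ 2)) ->
  0 <= P2 -> P2 * t <= k * (9 * (1 - t ^ 2) ^ 2) ->
  k * (t ^ 3 * (1 - t ^ 2) * (72 + 15 * (1 - t ^ 2))) <= D2 ->
  0 < 2 * D2 * P1 - D1 * P2.
Proof.
  intros Hk Ht HP1 HD1 HP2 HP2t HD2.
  assert (Q := cross_polynomial_pos t ltac:(lra)).
  assert (Hn : 0 < 1 - t ^ 2) by nra.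
  assert (Ht3 : 0 < t ^ 3) by (apply pow_lt; lra).
  assert (Hlow : 0 <= k * (t ^ 3 * (1 - t ^ 2) * (72 + 15 * (1 - t ^ 2)))).
  { apply Rmult_le_pos; [lra |]; apply Rmult_le_pos; nra. }
  assert (Hlow1 : 0 <= k * (12 - 9 * t ^ 2)) by (apply Rmult_le_pos; nra).
  assert (L : k * (t ^ 3 * (1 - t ^ 2) * (72 + 15 * (1 - t ^ 2))) * (k * (12 - 9 * t ^ 2))
              <= D2 * P1) by (apply Rmult_le_compat; lra).
  assert (U : D1 * (P2 * t) <= k * (9 * t ^ 3 * (8 - 3 * t ^ 2)) * (k * (9 * (1 - t ^ 2) ^ 2)))
    by (apply Rmult_le_compat; nra).
  assert (Hq : 0 < k * k * t ^ 3 * (1 - t ^ 2) * (2 * t * (72 + 15 * (1 - t ^ 2)) * (12 - 9 * t ^ 2)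
                                   - 81 * (8 - 3 * t ^ 2) * (1 - t ^ 2))).
  { repeat apply Rmult_lt_0_compat; lra. }
  assert (0 < t * (2 * D2 * P1 - D1 * P2)) by nra.
  nra.
Qed.

Lemma energy_certificate k t P1 D1 P2 D2 : 0 < k -> 4/7 <= t <= 1 ->
  k * (12 - 9 * t ^ 2) <= P1 ->
  0 <= D1 <= k * (9 * t ^ 3 * (8 - 3 * t ^ 2)) ->
  k * (9 * (1 - t ^ 2) ^ 2) <= P2 ->
  0 <= D2 <= k * ((1 - t ^ 2) * (72 * t ^ 2 + 15 * (1 - t ^ 2))) ->
  (1 - t ^ 2) * (D1 ^ 2 + D2 ^ 2) < 3 * t ^ 4 * (16 * P1 ^ 2 + 4 * P2 ^ 2).
Proof.
  intros Hk Ht HP1 HD1 HP2 HD2.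
  assert (Q := energy_polynomial_pos t Ht).
  assert (Hn : 0 <= 1 - t ^ 2) by nra.
  assert (Ht4 : 0 <= t ^ 4) by (apply pow_le; lra).
  assert (sq_le : forall a b, 0 <= a <= b -> a ^ 2 <= b ^ 2) by (intros; nra).
  assert (E1 := sq_le _ _ HD1); assert (E2 := sq_le _ _ HD2).
  assert (E3 : (k * (12 - 9 * t ^ 2)) ^ 2 <= P1 ^ 2)
    by (apply sq_le; split; [apply Rmult_le_pos |]; nra).
  assert (E4 : (k * (9 * (1 - t ^ 2) ^ 2)) ^ 2 <= P2 ^ 2)
    by (apply sq_le; split; [apply Rmult_le_pos |]; nra).
  assert (F1 := Rmult_le_compat_l _ _ _ Hn (Rplus_le_compat _ _ _ _ E1 E2)).
  assert (F2 := Rmult_le_compat_l _ _ _ Ht4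
                  (Rplus_le_compat _ _ _ _ (Rmult_le_compat_l 16 _ _ ltac:(lra) E3)
                                         (Rmult_le_compat_l 4 _ _ ltac:(lra) E4))).
  assert (Hk2 : 0 < k ^ 2) by (apply pow_lt, Hk).
  assert (G := Rmult_lt_0_compat _ _ Hk2 Q).
  nra.
Qed.

Lemma inv_in_certified_range x : 1 < x <= 1732 / 1000 -> 4/7 <= / x < 1.
Proof.
  intros Hx; split.
  - replace (4/7) with (/ (7/4)) by field; apply Rinv_le_contravar; lra.
  - rewrite <- Rinv_1; apply Rinv_lt_contravar; lra.
Qed.

Lemma cross_deriv_psi_pos x : 1 < x <= 1732 / 1000 -> 0 < cross_deriv psi1 psi2 x.
Proof.
  intros Hx; assert (Ht := inv_in_certified_range x Hx).
  destruct (psi1_estimates (/ x) ltac:(lra)) as (P1 & D1).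
  destruct (psi2_estimates (/ x) ltac:(lra)) as (P2 & P2t & D2 & _).
  rewrite Rinv_inv in P1, D1, P2, P2t, D2.
  assert (P2pos : 0 <= 32 * psi2 x)
    by (eapply Rle_trans; [| exact P2]; pose proof PI_RGT_0;
        pose proof (pow2_ge_0 (1 - / x ^ 2)); nra).
  assert (C := cross_certificate PI (/ x) _ _ _ _ PI_RGT_0 Ht P1 D1 P2pos P2t D2).
  unfold cross_deriv; lra.
Qed.

Lemma psi_energy_lt x : 1 < x <= 1732 / 1000 ->
  x ^ 2 * (x ^ 2 - 1) * (Derive psi1 x ^ 2 + Derive psi2 x ^ 2) < 3 * (psi1 x ^ 2 + psi2 x ^ 2).
Proof.
  intros Hx; assert (Ht := inv_in_certified_range x Hx).
  destruct (psi1_estimates (/ x) ltac:(lra)) as (P1 & D1).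
  destruct (psi2_estimates (/ x) ltac:(lra)) as (P2 & _ & D2l & D2u).
  rewrite Rinv_inv in P1, D1, P2, D2l, D2u.
  set (t := / x) in *.
  assert (D2pos : 0 <= 64 * Derive psi2 x).
  { eapply Rle_trans; [| exact D2l].
    assert (0 < t ^ 3) by (apply pow_lt; lra); assert (0 < 1 - t ^ 2) by nra.
    pose proof PI_RGT_0; apply Rmult_le_pos; [| apply Rmult_le_pos; [apply Rmult_le_pos |]]; lra. }
  assert (E := energy_certificate PI t _ _ _ _ PI_RGT_0 ltac:(lra) P1 D1 P2 (conj D2pos D2u)).
  assert (Hx4 : 0 < t ^ 4) by (apply pow_lt; lra).
  apply (Rmult_lt_reg_l (t ^ 4) _ _ Hx4).
  replace (t ^ 4 * (x ^ 2 * (x ^ 2 - 1) * (Derive psi1 x ^ 2 + Derive psi2 x ^ 2)))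
    with ((1 - t ^ 2) * (Derive psi1 x ^ 2 + Derive psi2 x ^ 2)) by (unfold t; field; lra).
  lra.
Qed.

Lemma cross_dot_wronskian_psi_pos x : 1 < x <= 1732 / 1000 ->
  0 < Derive (cross_deriv psi1 psi2) x * dot_deriv psi1 psi2 x
      - cross_deriv psi1 psi2 x * Derive (dot_deriv psi1 psi2) x.
Proof.
  intros Hx.
  destruct (psi_common_ode x ltac:(lra)) as (E1 & E2 & O1 & O2).
  rewrite (cross_dot_wronskian _ _ _ _ _ E1 E2 O1 O2).
  assert (W := cross_deriv_psi_pos x Hx); assert (En := psi_energy_lt x Hx).
  assert (Hq : 0 < x ^ 2 * (x ^ 2 - 1)) by (apply Rmult_lt_0_compat; nra).
  set (q := x ^ 2 * (x ^ 2 - 1)) in *.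
  set (S := psi1 x ^ 2 + psi2 x ^ 2) in *; set (D := Derive psi1 x ^ 2 + Derive psi2 x ^ 2) in *.
  replace (-3 / q * S + D) with (- ((3 * S - q * D) / q)) by (field; lra).
  assert (0 < (3 * S - q * D) / q) by (apply Rdiv_lt_0_compat; lra).
  nra.
Qed.

Lemma Wphi_scaled y : Wphi y = 4 * (4 / (3 * PI)) ^ 2 * cross_deriv psi1 psi2 y.
Proof.
  unfold Wphi, cross_deriv, phi1, phi2; rewrite !Derive_scal.
  assert (PI <> 0) by apply PI_neq0; field; auto.
Qed.

Lemma Qphi_scaled y : Qphi y = 16 * (4 / (3 * PI)) ^ 2 * dot_deriv psi1 psi2 y.
Proof.
  unfold Qphi, dot_deriv, phi1, phi2; rewrite !Derive_scal.
  assert (PI <> 0) by apply PI_neq0; field; auto.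
Qed.

Lemma nu_scaled x : nu x = 64 * (4 / (3 * PI)) ^ 4 *
  (Derive (cross_deriv psi1 psi2) x * dot_deriv psi1 psi2 x
   - cross_deriv psi1 psi2 x * Derive (dot_deriv psi1 psi2) x).
Proof.
  unfold nu.
  rewrite (Derive_ext _ _ _ Wphi_scaled), (Derive_ext _ _ _ Qphi_scaled), !Derive_scal,
    Wphi_scaled, Qphi_scaled.
  ring.
Qed.

Lemma mu_as_ratio x : mu x = dot_deriv psi1 psi2 x / cross_deriv psi1 psi2 x.
Proof. reflexivity. Qed.

Theorem mainTheorem12 :
  (forall x : R, 1 < x <= 1732 / 1000 -> 0 < nu x) /\
  (forall x y : R, 1 < x -> x < y -> y <= 1732 / 1000 -> mu y < mu x).
Proof.
  split.
  - intros x Hx; rewrite nu_scaled.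
    apply Rmult_lt_0_compat; [| apply cross_dot_wronskian_psi_pos, Hx].
    assert (0 < 4 / (3 * PI)) by (pose proof PI_RGT_0; apply Rdiv_lt_0_compat; lra).
    assert (0 < (4 / (3 * PI)) ^ 4) by (apply pow_lt; lra); lra.
  - intros x y Hx Hxy Hy; rewrite !mu_as_ratio.
    apply ratio_decreasing; [exact Hxy |].
    intros z Hz; destruct (psi_common_ode z ltac:(lra)) as (E1 & E2 & O1 & O2).
    split; [| split; [| split]].
    + eexists; apply (is_derive_cross_deriv _ _ _ _ _ E1 E2 O1 O2).
    + eexists; apply (is_derive_dot_deriv _ _ _ _ _ E1 E2 O1 O2).
    + apply Rgt_not_eq, cross_deriv_psi_pos; lra.
    + apply cross_dot_wronskian_psi_pos; lra.
Qed.
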